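(* Let $G=(V,E)$ be a graph with $n$ vertices and integer edge weights $w\colon E\to\{1,\dots,W\}$, let $\beta\in(0,1]$, and run the clustering defined in the context with $p=\beta/4$ and $r=\left\lceil \frac{1}{p}\ln\!\left(\frac{n^2}{p}\right)+\frac{1}{4p}\right\rceil$. Then for every edge $(u,v)\in E$, the probability that $u$ and $v$ belong to different clusters (i.e., $c_u\neq c_v$) is at most $4p\cdot w(u,v)$.
   Context: Setting (the clustering): $G=(V,E)$ has integer edge weights, $d_G$ is the weighted shortest-path distance, and each vertex has a distinct identifier $\mathrm{ID}(v)$. For $p\in(0,1)$, $r\in\mathbb{N}$, let $\mathrm{GeomCap}(p,r)$ be the distribution on $\{0,\dots,r\}$ with $\Pr[=i]=p(1-p)^i$ for $0\leq i\leq r-1$ and $\Pr[=r]=(1-p)^r$. Each vertex $v$ independently samples $\delta_v\sim\mathrm{GeomCap}(p,r)$. For $u,x\in V$ define $d^{(u)}(s,x):=r-\delta_u+d_G(u,x)$ and $d_{G'}(s,x):=\min_{u\in V} d^{(u)}(s,x)$. The cluster center $c_x$ of $x$ is the vertex $u$ with smallest $\mathrm{ID}$ among those with $d^{(u)}(s,x)=d_{G'}(s,x)$; the cluster of a center $c$ is $\{x\in V: c_x=c\}$. *)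

From HB Require Import structures.
From mathcomp Require Import all_boot all_order all_algebra.
From mathcomp Require Import boolp reals exp.
Set Implicit Arguments. Unset Strict Implicit. Unset Printing Implicit Defensive.
Import Order.TTheory GRing.Theory Num.Theory.

Section Clustering.
Variables (V : finType) (E : rel V) (w : V -> V -> nat).

Fixpoint walkw (x : V) (p : seq V) : nat :=
  if p is y :: p' then w x y + walkw y p' else 0.

Definition walk_weight_pred (u x : V) : pred nat :=
  fun n => `[< exists p : seq V, [/\ path E u p, last u p = x & walkw u p = n] >].

(* weighted shortest-path distance d_G(u,x); None = +infinity (no walk) *)
Definition dG (u x : V) : option nat :=
  match pselect (exists n, walk_weight_pred u x n) with
  | left H => Some (ex_minn H)
  | right _ => None
  end.

Variable r : nat.
Variable delta : {ffun V -> 'I_r.+1}.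

Definition dU (u x : V) : option nat :=
  omap (fun d => r - delta u + d) (dG u x).

Definition omin (a b : option nat) : option nat :=
  match a, b with
  | Some x, Some y => Some (minn x y)
  | Some x, None => Some x
  | None, b => b
  end.

Definition dGp (x : V) : option nat := \big[omin/None]_(u : V) dU u x.

Variable ID : V -> nat.

Definition center (x : V) : V :=
  [arg min_(u < x | dU u x == dGp x) ID u].

End Clustering.

Definition geomcap (R : realType) (p : R) (r : nat) (i : 'I_r.+1) : R :=
  (if (i < r)%N then p * (1 - p) ^+ i else (1 - p) ^+ r)%R.

Definition prob_delta (R : realType) (V : finType) (p : R) (r : nat)
  (delta : {ffun V -> 'I_r.+1}) : R :=
  (\prod_(v : V) geomcap p (delta v))%R.

Definition rpar (R : realType) (p : R) (n : nat) : nat :=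
  `|Num.ceil (p^-1 * ln ((n ^ 2)%:R / p) + (4 * p)^-1)%R|%N.

From Pilot Require Import Defs.
From mathcomp Require Import all_boot all_order all_algebra.
From mathcomp Require Import boolp reals sequences exp.
From mathcomp Require Import zify ring lra.
Import Order.TTheory GRing.Theory Num.Theory.
Set Implicit Arguments. Unset Strict Implicit. Unset Printing Implicit Defensive.

(* Fix an edge uv and a vertex z, and resample only delta_z = i, keeping the
   other shifts.  The event "z is the center of u" is then an up-set
   {i >= a}, of probability (1-p)^a.  If moreover the center y of v differs
   from z, comparing d^(z) and d^(y) across the edge in both directions gives
   i <= a + 2 w(u,v).  So, apart from the capped value i = r, the event
   "c_u = z <> c_v" lies in a window of 2 w(u,v) + 1 values of mass at most
   p (1-p)^a each, and has probability at most
   (2 w(u,v) + 1) p Pr[c_u = z] + (1-p)^r.  Summing over z bounds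
   Pr[c_u <> c_v] by (2 w(u,v) + 1) p + n (1-p)^r, and the choice of r makes
   n (1-p)^r <= p <= w(u,v) p. *)

Section ShortestPaths.
Variables (V : finType) (E : rel V) (w : V -> V -> nat).

Lemma walkw_rcons x p y : walkw w x (rcons p y) = walkw w x p + w (last x p) y.
Proof. by elim: p x => [|z p IH] x /=; rewrite ?addn0 ?IH ?addnA. Qed.

Lemma dG_refl a : dG E w a a = Some 0.
Proof.
have nil_walk : walk_weight_pred E w a a 0 by apply/asboolP; exists [::].
rewrite /dG; case: pselect => [ex|]; last by case; exists 0.
by case: ex_minnP => m _ /(_ 0 nil_walk); rewrite leqn0 => /eqP ->.
Qed.

Lemma dG_walk a b d : dG E w a b = Some d ->
  exists p, [/\ path E a p, last a p = b & walkw w a p = d].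
Proof. by rewrite /dG; case: pselect => // ex [<-]; case: ex_minnP => m /asboolP. Qed.

Lemma dG_le_walkw a p : path E a p ->
  exists2 d, dG E w a (last a p) = Some d & d <= walkw w a p.
Proof.
move=> Ep; have pw : walk_weight_pred E w a (last a p) (walkw w a p).
  by apply/asboolP; exists p.
rewrite /dG; case: pselect => [ex|]; last by case; exists (walkw w a p).
by exists (ex_minn ex) => //; case: ex_minnP => m _; apply.
Qed.

Lemma dG_edge a b c d : dG E w a b = Some d -> E b c ->
  exists2 d', dG E w a c = Some d' & d' <= d + w b c.
Proof.
move=> /dG_walk [p [Ep <- <-]] Ebc.
have Epc : path E a (rcons p c) by rewrite rcons_path Ep.
by have [d'] := dG_le_walkw Epc; rewrite last_rcons walkw_rcons; exists d'.
Qed.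

End ShortestPaths.

Lemma big_omin_le (I : eqType) (s : seq I) (f : I -> option nat) i d :
  i \in s -> f i = Some d ->
  exists2 m, \big[omin/None]_(j <- s) f j = Some m & m <= d.
Proof.
elim: s => // x s IH; rewrite inE big_cons => /predU1P[-> ->|/IH fi /fi [m ->]].
  case: (\big[omin/None]_(j <- s) f j) => [b|]; last by exists d.
  by exists (minn d b); rewrite ?geq_minl.
by case: (f x) => [a|] le; [exists (minn a m); rewrite // geq_min le orbT | exists m].
Qed.

Lemma big_omin_attained (I : Type) (s : seq I) (f : I -> option nat) m :
  \big[omin/None]_(j <- s) f j = Some m -> exists i, f i = Some m.
Proof.
elim: s => [|x s IH]; rewrite ?big_nil ?big_cons //.
case fx: (f x) => [a|]; case: (\big[omin/None]_(j <- s) f j) IH => [b|] //= IH.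
  by rewrite /minn; case: ltnP => _ //; case=> <-; exists x.
by case=> <-; exists x.
Qed.

Lemma arg_min_seed (I : finType) (i0 j : I) (P : pred I) (F : I -> nat) :
  P j -> [arg min_(i < i0 | P i) F i] = [arg min_(i < j | P i) F i].
Proof.
move=> Pj; have := arg_minnP F Pj; rewrite /arg_min /extremum.
case: pickP => [//|noP] /= [i Pi minF]; move: (noP i) => /=; rewrite Pi /=.
by move/negbT; rewrite negb_forall => /existsP [k]; rewrite negb_imply => /andP [/minF ->].
Qed.

Section Centers.
Variables (V : finType) (E : rel V) (w : V -> V -> nat) (r : nat)
  (delta : {ffun V -> 'I_r.+1}) (ID : V -> nat).

Local Notation dU := (dU E w delta).
Local Notation dGp := (dGp E w delta).
Local Notation center := (center E w delta ID).

Lemma dU_refl x : dU x x = Some (r - delta x).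
Proof. by rewrite /dU dG_refl /= addn0. Qed.

Lemma dGp_le y x m : dU y x = Some m -> exists2 m', dGp x = Some m' & m' <= m.
Proof. exact: big_omin_le (mem_index_enum y). Qed.

Lemma dGp_attained x m : dGp x = Some m -> exists y, dU y x = Some m.
Proof. exact: big_omin_attained. Qed.

Lemma center_argmin x :
  dU (center x) x = dGp x /\ forall y, dU y x = dGp x -> ID (center x) <= ID y.
Proof.
have [m dGpx _] := dGp_le (dU_refl x).
have [y dUy] := dGp_attained dGpx.
have Py : dU y x == dGp x by rewrite dUy dGpx.
rewrite /Defs.center (arg_min_seed x ID Py).
by case: arg_minnP => // c /eqP -> minc; split => // z /eqP /minc.
Qed.

Definition is_center (z x : V) := exists m, dU z x = Some m /\
  forall y m', dU y x = Some m' -> m <= m' /\ (m' = m -> ID z <= ID y).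

Lemma center_is_center x : is_center (center x) x.
Proof.
have [dUc minID] := center_argmin x.
have [m dGpx _] := dGp_le (dU_refl x).
exists m; split; first by rewrite dUc.
move=> y m' dUy; have [m'' dGpx' le] := dGp_le dUy.
move: dGpx' le; rewrite dGpx => -[<-] le; split => // eqm.
by apply: minID; rewrite dUy dGpx eqm.
Qed.

Lemma is_center_center z x : injective ID -> is_center z x -> center x = z.
Proof.
move=> injID [m [dUz minz]].
have [m' dGpx le] := dGp_le dUz.
have [y dUy] := dGp_attained dGpx.
have {le} em : m' = m by apply/eqP; rewrite eqn_leq le (minz y m' dUy).1.
have [dUc minID] := center_argmin x.
have l1 : ID (center x) <= ID z by apply: minID; rewrite dUz dGpx em.
rewrite dGpx em in dUc; have [_ l2] := minz _ _ dUc.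
by apply: injID; apply/eqP; rewrite eqn_leq l1 l2.
Qed.

End Centers.

Definition upd (V : finType) (T : Type) (f : {ffun V -> T}) (z : V) (t : T) :
  {ffun V -> T} := [ffun y => if y == z then t else f y].

Lemma upd_eq (V : finType) T (f : {ffun V -> T}) z t : upd f z t z = t.
Proof. by rewrite ffunE eqxx. Qed.

Lemma upd_neq (V : finType) T (f : {ffun V -> T}) z t y :
  y != z -> upd f z t y = f y.
Proof. by rewrite ffunE => /negbTE ->. Qed.

Lemma upd_upd (V : finType) T (f : {ffun V -> T}) z s t :
  upd (upd f z s) z t = upd f z t.
Proof. by apply/ffunP => y; rewrite !ffunE; case: eqP. Qed.

Lemma upd_id (V : finType) T (f : {ffun V -> T}) z : upd f z (f z) = f.
Proof. by apply/ffunP => y; rewrite ffunE; case: eqP => [->|]. Qed.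

Section Resampling.
Variables (V : finType) (E : rel V) (w : V -> V -> nat) (r : nat) (ID : V -> nat).
Variables (d0 : {ffun V -> 'I_r.+1}) (z : V).
Hypothesis injID : injective ID.

Local Notation center_at i := (center E w (upd d0 z i) ID).

Lemma dU_upd_neq (i j : 'I_r.+1) y x :
  y != z -> dU E w (upd d0 z i) y x = dU E w (upd d0 z j) y x.
Proof. by move=> yz; rewrite /dU !upd_neq. Qed.

Lemma center_upd_mono (i j : 'I_r.+1) x :
  center_at i x = z -> i <= j -> center_at j x = z.
Proof.
move=> ci ij; apply: is_center_center => //.
have [m [+ minz]] := center_is_center E w (upd d0 z i) ID x; rewrite ci in minz *.
rewrite /dU upd_eq; case dz: (dG E w z x) => [d|] //= -[em].
exists (r - j + d); split; first by rewrite /dU upd_eq dz.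
move=> y m'; have [->|yz] := eqVneq y z; first by rewrite /dU upd_eq dz => -[<-].
rewrite -(dU_upd_neq i j x yz) => /minz [l1 l2].
have lm : r - j + d <= m by rewrite -em; have := ltn_ord i; have := ltn_ord j; lia.
split; first exact: leq_trans lm l1.
by move=> e; apply: l2; apply/eqP; rewrite eqn_leq l1 /=; lia.
Qed.

Hypotheses (Esym : symmetric E) (wsym : forall x y, w x y = w y x).

Lemma center_upd_gap (i j : 'I_r.+1) u v : E u v ->
  center_at i u = z -> center_at i v != z -> center_at j u = z ->
  i <= j + 2 * w u v.
Proof.
move=> Euv ciu civ cju; set y := center_at i v in civ.
have [mv [+ minv]] := center_is_center E w (upd d0 z i) ID v; rewrite -/y.
rewrite /dU upd_neq //; case dyv: (dG E w y v) => [e|] //= -[emv].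
have [mu [+ _]] := center_is_center E w (upd d0 z i) ID u.
rewrite ciu /dU upd_eq; case dzu: (dG E w z u) => [d|] //= _.
have [d' dzv le_d'] := dG_edge dzu Euv.
have dUzv : dU E w (upd d0 z i) z v = Some (r - i + d') by rewrite /dU dzv upd_eq.
have [le_mv _] := minv _ _ dUzv.
have [e' dyu le_e'] := dG_edge dyv (etrans (Esym v u) Euv).
have [mj [+ minj]] := center_is_center E w (upd d0 z j) ID u.
rewrite cju /dU upd_eq dzu /= => -[emj].
have dUyu : dU E w (upd d0 z j) y u = Some (r - d0 y + e') by rewrite /dU dyu /= upd_neq.
have [le_mj _] := minj _ _ dUyu.
rewrite wsym in le_e'.
by have := ltn_ord i; have := ltn_ord j; have := ltn_ord (d0 y); lia.
Qed.

End Resampling.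

Local Open Scope ring_scope.

Lemma card_ord_window n (P : pred 'I_n) a k :
  (forall i, P i -> (a <= i <= a + k)%N) -> (#|P| <= k.+1)%N.
Proof.
move=> Pa; rewrite cardE -(size_map (@nat_of_ord n)) -(size_iota a k.+1).
apply: uniq_leq_size; first by rewrite map_inj_uniq ?enum_uniq //; exact: ord_inj.
by move=> _ /mapP[i + ->]; rewrite mem_enum mem_iota => /Pa; lia.
Qed.

Section GeomCap.
Variables (R : realType) (p : R) (r : nat).

Local Notation g := (@geomcap R p r).

Lemma geomcap_tail a : (a <= r)%N ->
  \sum_(i : 'I_r.+1 | (a <= i)%N) g i = (1 - p) ^+ a.
Proof.
move=> ar; pose G n := if (n < r)%N then p * (1 - p) ^+ n else (1 - p) ^+ r.
rewrite (eq_bigr (G \o val)) // -(big_geq_mkord a r.+1 xpredT G) big_nat_recr //=.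
rewrite /G ltnn (@eq_big_nat _ _ _ a r _ (fun n => - ((1 - p) ^+ n.+1 - (1 - p) ^+ n))).
  by rewrite sumrN (telescope_sumr (fun n => (1 - p) ^+ n)) //; ring.
by move=> n /andP[_ ->]; rewrite exprS; ring.
Qed.

Lemma geomcap_sum1 : \sum_(i : 'I_r.+1) g i = 1.
Proof. by rewrite -(expr0 (1 - p)) -geomcap_tail. Qed.

Hypotheses (p0 : 0 <= p) (p1 : p <= 1).

Lemma geomcap_ge0 i : 0 <= g i.
Proof. by rewrite /geomcap; case: ifP => _; rewrite ?mulr_ge0 ?exprn_ge0 ?subr_ge0. Qed.

Lemma geomcap_window (B S : pred 'I_r.+1) k :
  {subset B <= S} -> (forall i j : 'I_r.+1, S i -> (i <= j)%N -> S j) ->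
  (forall i j : 'I_r.+1, B i -> S j -> (i <= j + k)%N) ->
  \sum_(i | B i) g i <= k.+1%:R * p * \sum_(i | S i) g i + (1 - p) ^+ r.
Proof.
move=> BS Sup Bgap.
have [i0 Bi0|B0] := pickP B; last first.
  rewrite big_pred0 // addr_ge0 ?exprn_ge0 ?subr_ge0 ?mulr_ge0 ?sumr_ge0 //.
  by move=> i _; apply: geomcap_ge0.
have [a Sa mina] := arg_minnP val (BS _ Bi0).
have Sge : S =1 (fun j : 'I_r.+1 => a <= j)%N.
  by move=> j; apply/idP/idP => [/mina|/Sup]; last apply.
have a_le_r : (a <= r)%N by rewrite -ltnS.
rewrite (eq_bigl _ _ Sge) geomcap_tail // (bigID (pred1 ord_max)) /= addrC lerD //; last first.
  rewrite big_andbC big_mkcondr big_pred1_eq /geomcap ltnn.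
  by case: ifP; rewrite ?exprn_ge0 ?subr_ge0.
have window i : B i -> (a <= i <= a + k)%N.
  by move=> Bi; rewrite -Sge; apply/andP; split; [exact: BS | exact: Bgap Bi Sa].
apply: le_trans (_ : \sum_(i | B i && (i != ord_max)) p * (1 - p) ^+ a <= _).
  apply: ler_sum => i /andP[/window/andP[ai _] imax].
  have ir : (i < r)%N.
    rewrite ltn_neqAle -ltnS ltn_ord andbT.
    by apply: contra imax => /eqP ir; apply/eqP/val_inj.
  by rewrite /geomcap ir ler_wpM2l // ler_wiXn2l // ?subr_ge0 // lerBlDr lerDl.
rewrite sumr_const -[X in X <= _]mulr_natl mulrA.
rewrite ler_wpM2r ?exprn_ge0 ?subr_ge0 // ler_wpM2r // ler_nat.
by apply: (card_ord_window (a := a)) => i /andP[/window].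
Qed.

End GeomCap.

Lemma expr_onesub_le_expR (R : realType) (p : R) m :
  p <= 1 -> (1 - p) ^+ m <= expR (- (p * m%:R)).
Proof.
move=> p1; rewrite -mulNr mulrC expRM_natl lerXn2r ?nnegrE ?subr_ge0 ?expR_ge0 //.
exact: expR_ge1Dx.
Qed.

Lemma ln_le_rpar (R : realType) (p : R) n :
  0 < p -> p <= 1 -> (0 < n)%N -> ln ((n ^ 2)%:R / p) <= p * (rpar p n)%:R.
Proof.
move=> p0 p1 n0; set L := ln _.
have L0 : 0 <= L.
  by apply/ln_ge0; rewrite ler_pdivlMr // mul1r (le_trans p1) // ler1n expn_gt0 n0.
set X := p^-1 * L + (4 * p)^-1.
have X0 : 0 <= X by rewrite addr_ge0 // ?invr_ge0 ?mulr_ge0 // ?invr_ge0 ltW.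
have rX : X <= (rpar p n)%:R.
  by rewrite natr_absz ger0_norm ?ceil_ge // ceil_ge0 (lt_le_trans _ X0) ?ltrN10.
apply: le_trans (_ : p * X <= _); last by rewrite ler_wpM2l // ltW.
have -> : p * X = L + 4^-1 by rewrite /X; field; rewrite gt_eqF.
by rewrite lerDl invr_ge0.
Qed.

Lemma rpar_tail_le (R : realType) (p : R) n :
  0 < p -> p <= 1 -> (0 < n)%N -> n%:R * (1 - p) ^+ rpar p n <= p.
Proof.
move=> p0 p1 n0; have n0R : (0 : R) < n%:R by rewrite ltr0n.
have n2p : 0 < (n ^ 2)%:R / p :> R by rewrite divr_gt0 // ltr0n expn_gt0 n0.
apply: le_trans (_ : n%:R * (p / (n ^ 2)%:R) <= _).
  rewrite ler_wpM2l ?ler0n // (le_trans (expr_onesub_le_expR _ p1)) //.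
  by rewrite -[p / _]invf_div -(lnK n2p) -expRN ler_expR lerN2 ln_le_rpar.
have -> : n%:R * (p / (n ^ 2)%:R) = p / n%:R by rewrite natrX; field; rewrite gt_eqF.
by rewrite ler_pdivrMr // ler_peMr ?ler1n ?ltW.
Qed.

Lemma sum_ffun_upd (R : realType) (V T : finType) (z : V) (t0 : T)
    (F : {ffun V -> T} -> R) :
  \sum_(d : {ffun V -> T}) F d =
  \sum_(d0 : {ffun V -> T} | d0 z == t0) \sum_(t : T) F (upd d0 z t).
Proof.
(* an outcome d is grouped with upd d z t0, its restriction to V minus z *)
rewrite (partition_big (fun d => upd d z t0) (fun d0 => d0 z == t0)) /=;
  last by move=> d _; rewrite upd_eq.
apply: eq_bigr => d0 /eqP d0z.
rewrite (partition_big (fun d : {ffun V -> T} => d z) xpredT) //=.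
apply: eq_bigr => t _; apply: big_pred1 => d /=.
apply/andP/eqP => [[/eqP <- /eqP <-]|->]; first by rewrite upd_upd upd_id.
by rewrite upd_upd -d0z upd_id upd_eq.
Qed.

Section Probability.
Variables (R : realType) (p : R) (r : nat) (V : finType).

Local Notation rest d0 z := (\prod_(y | y != z) geomcap p (d0 y)).

Lemma prob_delta_upd (d0 : {ffun V -> 'I_r.+1}) z i :
  prob_delta p (upd d0 z i) = geomcap p i * rest d0 z.
Proof.
rewrite /prob_delta (bigD1 z) //= upd_eq; congr (_ * _).
by apply: eq_bigr => y yz; rewrite upd_neq.
Qed.

Lemma sum_prob_delta_upd z (Q : pred {ffun V -> 'I_r.+1}) :
  \sum_(d | Q d) prob_delta p d =
  \sum_(d0 : {ffun V -> 'I_r.+1} | d0 z == ord0)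
     rest d0 z * \sum_(i | Q (upd d0 z i)) geomcap p i.
Proof.
rewrite [LHS]big_mkcond (sum_ffun_upd z ord0); apply: eq_bigr => d0 _.
rewrite big_distrr [RHS]big_mkcond; apply: eq_bigr => i _.
by case: (Q _); rewrite ?mulr0 // prob_delta_upd mulrC.
Qed.

Lemma sum_prob_delta : \sum_(d : {ffun V -> 'I_r.+1}) prob_delta p d = 1.
Proof.
rewrite /prob_delta -(bigA_distr_bigA (fun (_ : V) (i : 'I_r.+1) => geomcap p i)) /=.
by apply: big1 => v _; apply: geomcap_sum1.
Qed.

Lemma sum_rest z :
  \sum_(d0 : {ffun V -> 'I_r.+1} | d0 z == ord0) rest d0 z = 1.
Proof.
rewrite -[RHS]sum_prob_delta (sum_prob_delta_upd z xpredT).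
by apply: eq_bigr => d0 _; rewrite /= geomcap_sum1 mulr1.
Qed.

End Probability.

Section CutEdge.
Variables (R : realType) (V : finType) (E : rel V) (w : V -> V -> nat)
  (ID : V -> nat) (p : R) (r : nat) (u v : V).
Hypotheses (p0 : 0 <= p) (p1 : p <= 1) (Esym : symmetric E)
  (wsym : forall x y, w x y = w y x) (injID : injective ID) (Euv : E u v).

Local Notation c d x := (center E w d ID x).

Lemma prob_center_cut_le z :
  \sum_(d : {ffun V -> 'I_r.+1} | (c d u == z) && (c d v != z)) prob_delta p d <=
  (2 * w u v).+1%:R * p * \sum_(d : {ffun V -> 'I_r.+1} | c d u == z) prob_delta p d
  + (1 - p) ^+ r.
Proof.
rewrite !(sum_prob_delta_upd _ z) -[X in _ + X]mulr1.
rewrite -[X in _ + _ * X](@sum_rest R p r V z).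
rewrite mulr_sumr big_distrr -big_split /=; apply: ler_sum => d0 _.
set rest := \prod_(y | y != z) _.
rewrite mulrCA [_ * rest]mulrC -mulrDr ler_wpM2l //.
  by apply: prodr_ge0 => y _; apply: geomcap_ge0.
apply: (geomcap_window p0 p1) => [i /andP[] //|i j /eqP ci ij|].
  by apply/eqP; apply: center_upd_mono ij.
move=> i j /andP[/eqP ciu civ] /eqP cju.
by apply: (center_upd_gap Esym wsym Euv ciu civ).
Qed.

Lemma prob_center_neq_le :
  \sum_(d : {ffun V -> 'I_r.+1} | c d u != c d v) prob_delta p d <=
  (2 * w u v).+1%:R * p + #|V|%:R * (1 - p) ^+ r.
Proof.
have split_center (P : pred {ffun V -> 'I_r.+1}) :
    \sum_(d | P d) prob_delta p d = \sum_z \sum_(d | P d && (c d u == z)) prob_delta p d.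
  exact: partition_big.
have sum_center_u : \sum_z \sum_(d : {ffun V -> 'I_r.+1} | c d u == z) prob_delta p d = 1.
  by rewrite -(split_center xpredT) sum_prob_delta.
have cut_at z :
    \sum_(d : {ffun V -> 'I_r.+1} | (c d u != c d v) && (c d u == z)) prob_delta p d =
    \sum_(d : {ffun V -> 'I_r.+1} | (c d u == z) && (c d v != z)) prob_delta p d.
  by apply: eq_bigl => d; rewrite andbC; case: eqP => // <-; rewrite eq_sym.
rewrite split_center (eq_bigr _ (fun z _ => cut_at z)).
apply: le_trans (ler_sum _ (fun z _ => prob_center_cut_le z)) _.
rewrite big_split /= -mulr_sumr sum_center_u mulr1 sumr_const.
by rewrite [X in _ <= _ + X]mulr_natl.
Qed.

End CutEdge.

Theorem lemma12 (R : realType) (V : finType) (E : rel V) (w : V -> V -> nat)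
  (W : nat) (ID : V -> nat) (beta : R) :
  symmetric E -> irreflexive E ->
  (forall x y, w x y = w y x) ->
  (forall x y, E x y -> (1 <= w x y <= W)%N) ->
  injective ID ->
  0 < beta <= 1 ->
  let p := beta / 4 in
  let r := rpar p #|V| in
  forall u v, E u v ->
    \sum_(delta : {ffun V -> 'I_r.+1}
          | center E w delta ID u != center E w delta ID v)
       prob_delta p delta
    <= 4 * p * (w u v)%:R.
Proof.
move=> Esym _ wsym wW injID /andP[b0 b1] p r u v Euv.
have p0 : 0 < p by rewrite divr_gt0.
have p1 : p <= 1 by rewrite ler_pdivrMr //; lra.
have n0 : (0 < #|V|)%N by apply/card_gt0P; exists u.
have tail := rpar_tail_le p0 p1 n0.
have w1 : 1 <= (w u v)%:R :> R by rewrite ler1n; case/andP: (wW _ _ Euv).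
apply: le_trans (prob_center_neq_le r (ltW p0) p1 Esym wsym injID Euv) _.
rewrite -/r -addn1 natrD natrM; nra.
Qed.
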